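(* Let $(F_E,\xi,\eta,g_E)$ be an almost contact Riemannian structure on a Lie algebroid $(E,\rho_E,[\cdot,\cdot]_E)$ of rank $2m+1$, with Levi-Civita connection $\nabla$ of $g_E$. Then $(F_E,\xi,\eta,g_E)$ is Sasakian (i.e. $d_E\eta=\Omega_E$ and $N_{F_E}+2\,d_E\eta\otimes\xi=0$) if and only if $$(\nabla_{s_1}F_E)s_2=g_E(s_1,s_2)\xi-\eta(s_2)s_1\quad\text{for all }s_1,s_2\in\Gamma(E).$$
   Context: A Lie algebroid $(E,\rho_E,[\cdot,\cdot]_E)$ over $M$ is a vector bundle with anchor $\rho_E:E\to TM$ and Lie bracket on $\Gamma(E)$ with $[s_1,fs_2]_E=f[s_1,s_2]_E+\rho_E(s_1)(f)s_2$. For a 1-form $\eta$, $(d_E\eta)(s_1,s_2)=\frac12\{\rho_E(s_1)(\eta(s_2))-\rho_E(s_2)(\eta(s_1))-\eta([s_1,s_2]_E)\}$. An almost contact Riemannian structure $(F_E,\xi,\eta,g_E)$: endomorphism $F_E$, $\xi\in\Gamma(E)$, $\eta\in\Gamma(E^* )$, bundle metric $g_E$ with $F_E^2=-I_E+\eta\otimes\xi$, $\eta(\xi)=1$, $g_E(F_Es_1,F_Es_2)=g_E(s_1,s_2)-\eta(s_1)\eta(s_2)$; fundamental form $\Omega_E(s_1,s_2)=g_E(s_1,F_Es_2)$. $N_{F_E}(s_1,s_2)=[F_Es_1,F_Es_2]_E-F_E[F_Es_1,s_2]_E-F_E[s_1,F_Es_2]_E+F_E^2[s_1,s_2]_E$.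 The Levi-Civita connection $\nabla$ is the unique $E$-connection ($\nabla_{fs}s'=f\nabla_ss'$, $\nabla_s(fs')=f\nabla_ss'+\rho_E(s)(f)s'$) that is torsion-free ($\nabla_{s_1}s_2-\nabla_{s_2}s_1=[s_1,s_2]_E$) and metric ($\rho_E(s)(g_E(s_1,s_2))=g_E(\nabla_ss_1,s_2)+g_E(s_1,\nabla_ss_2)$); $(\nabla_sF_E)s'=\nabla_s(F_Es')-F_E(\nabla_ss')$. *)

(* Lie algebroids are modelled through their module of smooth sections:
   the rank-n bundle E is (set-theoretically) identified fibrewise with
   'rV[R]_n, a section is a map M -> 'rV_n, and the smooth structure is
   encoded by the predicates C (smooth functions) and Gam (smooth sections). *)
From HB Require Import structures.
From mathcomp Require Import all_boot all_order all_algebra.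
From mathcomp Require Import reals.
Set Implicit Arguments. Unset Strict Implicit. Unset Printing Implicit Defensive.
Import Order.TTheory GRing.Theory Num.Theory.
Local Open Scope ring_scope.

Section LieAlgebroidDefs.
Variables (R : realType) (M : Type) (n : nat).

Definition fn := M -> R.
Definition sec := M -> 'rV[R]_n.

Definition fcst (c : R) : fn := fun _ => c.
Definition fadd (f h : fn) : fn := fun x => f x + h x.
Definition fmul (f h : fn) : fn := fun x => f x * h x.
Definition fopp (f : fn) : fn := fun x => - f x.
Definition sadd (s1 s2 : sec) : sec := fun x => s1 x + s2 x.
Definition sopp (s : sec) : sec := fun x => - s x.
Definition szero : sec := fun _ => 0.
Definition sscale (f : fn) (s : sec) : sec := fun x => f x *: s x.

Definition fun_ring (C : fn -> Prop) : Prop :=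
  [/\ forall c, C (fcst c),
      forall f h, C f -> C h -> C (fadd f h),
      forall f h, C f -> C h -> C (fmul f h) &
      forall f, C f -> C (fopp f)].

Definition section_module (C : fn -> Prop) (Gam : sec -> Prop) : Prop :=
  [/\ Gam szero,
      forall s1 s2, Gam s1 -> Gam s2 -> Gam (sadd s1 s2),
      forall f s, C f -> Gam s -> Gam (sscale f s) &
      forall x (v : 'rV[R]_n), exists s, Gam s /\ s x = v].

Definition lie_algebroid (C : fn -> Prop) (Gam : sec -> Prop)
    (rho : sec -> fn -> fn) (br : sec -> sec -> sec) : Prop :=
  [/\ fun_ring C, section_module C Gam,
    ([/\ forall s f, Gam s -> C f -> C (rho s f),
        forall s1 s2 f, Gam s1 -> Gam s2 -> C f ->
          rho (sadd s1 s2) f = fadd (rho s1 f) (rho s2 f) &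
        forall h s f, C h -> Gam s -> C f ->
          rho (sscale h s) f = fmul h (rho s f)] /\
    [/\ forall s c f, Gam s -> C f ->
          rho s (fmul (fcst c) f) = fmul (fcst c) (rho s f),
        forall s f h, Gam s -> C f -> C h ->
          rho s (fadd f h) = fadd (rho s f) (rho s h) &
        forall s f h, Gam s -> C f -> C h ->
          rho s (fmul f h) = fadd (fmul f (rho s h)) (fmul h (rho s f))]),
    [/\ forall s1 s2, Gam s1 -> Gam s2 -> Gam (br s1 s2),
        forall s1 s2 s3, Gam s1 -> Gam s2 -> Gam s3 ->
          br s1 (sadd s2 s3) = sadd (br s1 s2) (br s1 s3),
        forall s1 s2, Gam s1 -> Gam s2 -> br s1 s2 = sopp (br s2 s1) &
        forall s1 s2 s3, Gam s1 -> Gam s2 -> Gam s3 ->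
          sadd (br s1 (br s2 s3)) (sadd (br s2 (br s3 s1)) (br s3 (br s1 s2)))
            = szero] &
    ((forall s1 f s2, Gam s1 -> C f -> Gam s2 ->
       br s1 (sscale f s2) = sadd (sscale f (br s1 s2)) (sscale (rho s1 f) s2)) /\
    (forall s1 s2 f, Gam s1 -> Gam s2 -> C f ->
       rho (br s1 s2) f = fadd (rho s1 (rho s2 f)) (fopp (rho s2 (rho s1 f)))))].

(* Pointwise tensor data: F_E(x) acts on row vectors by v |-> v *m F x,
   eta_x(v) = (v *m eta x) 0 0, g_x(u,v) = (u *m g x *m v^T) 0 0. *)
Variables (F : M -> 'M[R]_n) (xi : sec) (eta : M -> 'cV[R]_n)
          (g : M -> 'M[R]_n).

Definition sF (s : sec) : sec := fun x => s x *m F x.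
Definition seta (s : sec) : fn := fun x => (s x *m eta x) 0 0.
Definition sg (s1 s2 : sec) : fn := fun x => (s1 x *m g x *m (s2 x)^T) 0 0.
Definition Omega (s1 s2 : sec) : fn := sg s1 (sF s2).

Definition almost_contact_riemannian (C : fn -> Prop) (Gam : sec -> Prop) : Prop :=
  [/\ Gam xi,
      forall s, Gam s -> Gam (sF s),
      forall s, Gam s -> C (seta s),
      forall s1 s2, Gam s1 -> Gam s2 -> C (sg s1 s2) &
      forall x,
      [/\ F x *m F x = - 1%:M + eta x *m xi x,
          (xi x *m eta x) 0 0 = 1,
          F x *m g x *m (F x)^T = g x - eta x *m (eta x)^T,
          (g x)^T = g x &
          forall v : 'rV[R]_n, v != 0 -> 0 < (v *m g x *m v^T) 0 0]].

Variables (rho : sec -> fn -> fn) (br : sec -> sec -> sec).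

Definition d_eta (s1 s2 : sec) : fn :=
  fun x => 2^-1 * (rho s1 (seta s2) x - rho s2 (seta s1) x - seta (br s1 s2) x).

Definition NF (s1 s2 : sec) : sec :=
  fun x => br (sF s1) (sF s2) x - sF (br (sF s1) s2) x
           - sF (br s1 (sF s2)) x + sF (sF (br s1 s2)) x.

Definition sasakian (Gam : sec -> Prop) : Prop :=
  forall s1 s2, Gam s1 -> Gam s2 ->
    d_eta s1 s2 = Omega s1 s2 /\
    (fun x => NF s1 s2 x + (2 * d_eta s1 s2 x) *: xi x) = szero.

Definition levi_civita (C : fn -> Prop) (Gam : sec -> Prop)
    (nabla : sec -> sec -> sec) : Prop :=
  [/\ forall s1 s2, Gam s1 -> Gam s2 -> Gam (nabla s1 s2),
      forall s1 s2 s3, Gam s1 -> Gam s2 -> Gam s3 ->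
        nabla (sadd s1 s2) s3 = sadd (nabla s1 s3) (nabla s2 s3),
      forall f s s', C f -> Gam s -> Gam s' ->
        nabla (sscale f s) s' = sscale f (nabla s s') &
    [/\ forall s s1 s2, Gam s -> Gam s1 -> Gam s2 ->
        nabla s (sadd s1 s2) = sadd (nabla s s1) (nabla s s2),
      forall s f s', Gam s -> C f -> Gam s' ->
        nabla s (sscale f s') = sadd (sscale f (nabla s s')) (sscale (rho s f) s'),
      forall s1 s2, Gam s1 -> Gam s2 ->
        sadd (nabla s1 s2) (sopp (nabla s2 s1)) = br s1 s2 &
      forall s s1 s2, Gam s -> Gam s1 -> Gam s2 ->
        rho s (sg s1 s2) = fadd (sg (nabla s s1) s2) (sg s1 (nabla s s2))]].

Definition nablaF (nabla : sec -> sec -> sec) (s s' : sec) : sec :=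
  fun x => nabla s (sF s') x - sF (nabla s s') x.

End LieAlgebroidDefs.

(* Let [Q(s1, s2, s3) = g((nabla_s1 F) s2, s3)] ([g_nablaF] below). Metricity of
   the Levi-Civita connection makes [Q] skew in its last two arguments, and torsion-freeness
   expresses [d_E eta], [d_E Omega] and [N_F] through [nabla F] and [nabla xi].
   For a Sasakian structure, [d_E eta = Omega] together with [nabla_xi xi = 0]
   gives [nabla xi = - F]; then [d_E Omega = d_E d_E eta = 0] and normality are
   linear relations on [Q] which pin it down as
   [g(s1, s2) eta(s3) - eta(s2) g(s1, s3)]. Conversely, the formula for
   [nabla F] yields [nabla xi = - F], from which [d_E eta = Omega] and
   normality follow by direct computation. *)

From Pilot Require Import Defs.
From HB Require Import structures.
From mathcomp Require Import all_boot all_order all_algebra.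
From mathcomp Require Import reals ring lra.
Set Implicit Arguments. Unset Strict Implicit. Unset Printing Implicit Defensive.
Import Order.TTheory GRing.Theory Num.Theory.
Local Open Scope ring_scope.

Section MatrixForms.
Variables (R : comPzRingType) (n : nat).
Implicit Types (u v w : 'rV[R]_n) (g : 'M[R]_n) (eta : 'cV[R]_n).

Definition mxform g u v : R := (u *m g *m v^T) 0 0.
Definition mxlin eta u : R := (u *m eta) 0 0.

Lemma mxformDl g u v w : mxform g (u + v) w = mxform g u w + mxform g v w.
Proof. by rewrite /mxform !mulmxDl mxE. Qed.
Lemma mxformDr g u v w : mxform g w (u + v) = mxform g w u + mxform g w v.
Proof. by rewrite /mxform linearD /= mulmxDr mxE. Qed.
Lemma mxformZl g a u w : mxform g (a *: u) w = a * mxform g u w.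
Proof. by rewrite /mxform -!scalemxAl mxE. Qed.
Lemma mxformZr g a u w : mxform g w (a *: u) = a * mxform g w u.
Proof. by rewrite /mxform linearZ /= -scalemxAr mxE. Qed.
Lemma mxformNl g u w : mxform g (- u) w = - mxform g u w.
Proof. by rewrite -scaleN1r mxformZl mulN1r. Qed.
Lemma mxformNr g u w : mxform g w (- u) = - mxform g w u.
Proof. by rewrite -scaleN1r mxformZr mulN1r. Qed.
Lemma mxform0l g w : mxform g 0 w = 0.
Proof. by rewrite /mxform !mul0mx mxE. Qed.
Lemma mxform0r g w : mxform g w 0 = 0.
Proof. by rewrite /mxform linear0 mulmx0 mxE. Qed.

Lemma mxformC g u v : g^T = g -> mxform g u v = mxform g v u.
Proof.
move=> gT; rewrite /mxform.
have tr11 (A : 'M[R]_1) : A 0 0 = A^T 0 0 by rewrite mxE.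
by rewrite tr11 !trmx_mul trmxK gT mulmxA.
Qed.

Lemma mxlinD eta u v : mxlin eta (u + v) = mxlin eta u + mxlin eta v.
Proof. by rewrite /mxlin mulmxDl mxE. Qed.
Lemma mxlinN eta u : mxlin eta (- u) = - mxlin eta u.
Proof. by rewrite /mxlin mulNmx mxE. Qed.
Lemma mxlin0 eta : mxlin eta 0 = 0.
Proof. by rewrite /mxlin mul0mx mxE. Qed.

Lemma mul11mx (A : 'M[R]_1) u : A *m u = A 0 0 *: u.
Proof. by apply/rowP => j; rewrite !mxE big_ord1 !ord1. Qed.

End MatrixForms.

Section AlmostContactMetricMatrix.
Variables (R : idomainType) (n : nat).
Variables (F g : 'M[R]_n) (xi : 'rV[R]_n) (eta : 'cV[R]_n).
Hypotheses (FF : F *m F = - 1%:M + eta *m xi) (xi_eta : (xi *m eta) 0 0 = 1)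
  (FgF : F *m g *m F^T = g - eta *m eta^T) (gT : g^T = g).
Implicit Types (u v : 'rV[R]_n).

Lemma mulmx_xi_eta : xi *m eta = 1%:M.
Proof. by apply/matrixP=> i j; rewrite !ord1 xi_eta mxE. Qed.

(* [xi F] is nilpotent and proportional to [xi], so it vanishes. *)
Lemma mulmx_xi_F : xi *m F = 0.
Proof.
have xiFF : xi *m F *m F = 0.
  by rewrite -mulmxA FF mulmxDr mulmxN mulmx1 mulmxA mulmx_xi_eta mul1mx addNr.
set c := (xi *m F *m eta) 0 0.
have xiF_prop : xi *m F = c *: xi.
  have : xi *m F *m (F *m F) = 0 by rewrite mulmxA xiFF mul0mx.
  rewrite FF mulmxDr mulmxN mulmx1 mulmxA => /eqP.
  by rewrite addrC subr_eq0 => /eqP <-; rewrite mul11mx.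
have c2 : c * c = 0.
  have : (xi *m F *m F *m eta) 0 0 = 0 by rewrite xiFF mul0mx mxE.
  by rewrite xiF_prop -scalemxAl xiF_prop -!scalemxAl mulmx_xi_eta !mxE eqxx mulr1n mulr1.
have c0 : c = 0 by apply/eqP; rewrite -[c == 0]orbb -mulf_eq0 c2.
by rewrite xiF_prop c0 scale0r.
Qed.

Lemma mulmx_F_eta : F *m eta = 0.
Proof.
have : F *m (F *m F) = (F *m F) *m F by rewrite mulmxA.
rewrite FF mulmxDr mulmxDl mulmxN mulmx1 mulNmx mul1mx -mulmxA mulmx_xi_F mulmx0 addr0.
move/(congr1 (mulmx^~ eta)).
rewrite mulmxDl -(mulmxA F) -mulmxA mulmx_xi_eta mulmx1 mulNmx addNr.
by move/eqP; rewrite eq_sym oppr_eq0 => /eqP.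
Qed.

Lemma mulmx_g_xiT : g *m xi^T = eta.
Proof.
have := congr1 (mulmx^~ xi^T) FgF => /=.
rewrite -mulmxA -trmx_mul mulmx_xi_F trmx0 mulmx0 mulmxBl -mulmxA -trmx_mul.
rewrite mulmx_xi_eta trmx1 mulmx1.
by move/eqP; rewrite eq_sym subr_eq0 => /eqP.
Qed.

Lemma mulmx_F_g : F *m g = - (g *m F^T).
Proof.
have FgFF : F *m g *m F^T *m F^T = g *m F^T.
  by rewrite FgF mulmxBl -(mulmxA eta) -trmx_mul mulmx_F_eta trmx0 mulmx0 subr0.
have FgFF' : F *m g *m F^T *m F^T = - (F *m g).
  rewrite -mulmxA -trmx_mul FF linearD /= linearN /= trmx1 trmx_mul.
  rewrite mulmxDr mulmxN mulmx1 mulmxA -(mulmxA F) mulmx_g_xiT mulmx_F_eta mul0mx addr0.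
  by [].
by rewrite -FgFF FgFF' opprK.
Qed.

Lemma mxform_xi u : mxform g u xi = mxlin eta u.
Proof. by rewrite /mxform -mulmxA mulmx_g_xiT. Qed.

Lemma mxform_xil u : mxform g xi u = mxlin eta u.
Proof. by rewrite mxformC // mxform_xi. Qed.

Lemma mxlin_F u : mxlin eta (u *m F) = 0.
Proof. by rewrite /mxlin -mulmxA mulmx_F_eta mulmx0 mxE. Qed.

Lemma mulmx_FF u : u *m F *m F = - u + mxlin eta u *: xi.
Proof. by rewrite -mulmxA FF mulmxDr mulmxN mulmx1 mulmxA mul11mx. Qed.

Lemma mxform_Fl u v : mxform g (u *m F) v = - mxform g u (v *m F).
Proof. by rewrite /mxform -(mulmxA u) mulmx_F_g mulmxN mulNmx mxE trmx_mul !mulmxA. Qed.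

Lemma mxform_FF u v : mxform g (u *m F) (v *m F) = mxform g u v - mxlin eta u * mxlin eta v.
Proof.
rewrite /mxform.
have -> : u *m F *m g *m (v *m F)^T = u *m (F *m g *m F^T) *m v^T.
  by rewrite trmx_mul !mulmxA.
rewrite FgF.
have -> : u *m (g - eta *m eta^T) *m v^T = u *m g *m v^T - (u *m eta) *m (v *m eta)^T.
  by rewrite mulmxBr mulmxBl trmx_mul !mulmxA.
by rewrite !mxE big_ord1 [_^T ord0 0]mxE.
Qed.

End AlmostContactMetricMatrix.

Section LieAlgebroidCalculus.
Variables (R : realType) (M : Type) (n : nat).
Variables (C : fn R M -> Prop) (Gam : sec R M n -> Prop)
    (rho : sec R M n -> fn R M -> fn R M)
    (br : sec R M n -> sec R M n -> sec R M n)
    (F : M -> 'M[R]_n) (xi : sec R M n)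
    (eta : M -> 'cV[R]_n) (g : M -> 'M[R]_n)
    (nabla : sec R M n -> sec R M n -> sec R M n).
Hypotheses (HL : lie_algebroid C Gam rho br)
  (HA : almost_contact_riemannian F xi eta g C Gam)
  (HN : levi_civita g rho br C Gam nabla).

Local Notation gx x := (mxform (g x)).
Local Notation ex x := (mxlin (eta x)).
Local Notation sF := (sF F).
Local Notation seta := (seta eta).
Local Notation sg := (sg g).
Local Notation deta := (d_eta eta rho br).
Local Notation nablaF := (nablaF F nabla).
Local Notation sz := (@szero R M n).

Lemma C_cst c : C (fcst c).
Proof. by case: HL => [[]]. Qed.
Lemma C_add f h : C f -> C h -> C (fadd f h).
Proof. by case: HL => [[_ hyp _ _]] *; apply: hyp. Qed.
Lemma C_opp f : C f -> C (fopp f).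
Proof. by case: HL => [[_ _ _ hyp]] *; apply: hyp. Qed.
Lemma Gam_zero : Gam sz.
Proof. by case: HL => _ []. Qed.
Lemma Gam_scale f s : C f -> Gam s -> Gam (sscale f s).
Proof. by case: HL => _ [_ _ hyp _] *; apply: hyp. Qed.
Lemma Gam_span x (v : 'rV[R]_n) : exists s, Gam s /\ s x = v.
Proof. by case: HL => _ []. Qed.
Lemma C_anchor s f : Gam s -> C f -> C (rho s f).
Proof. by case: HL => _ _ [[hyp _ _] _] *; apply: hyp. Qed.
Lemma anchor_scale s c f : Gam s -> C f -> rho s (fmul (fcst c) f) = fmul (fcst c) (rho s f).
Proof. by move=> *; case: HL => _ _ [_ []] ->. Qed.
Lemma anchor_add s f h : Gam s -> C f -> C h -> rho s (fadd f h) = fadd (rho s f) (rho s h).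
Proof. by move=> *; case: HL => _ _ [_ []] _ ->. Qed.
Lemma anchor_mul s f h : Gam s -> C f -> C h ->
  rho s (fmul f h) = fadd (fmul f (rho s h)) (fmul h (rho s f)).
Proof. by move=> *; case: HL => _ _ [_ []] _ _ ->. Qed.
Lemma Gam_br s1 s2 : Gam s1 -> Gam s2 -> Gam (br s1 s2).
Proof. by case: HL => _ _ _ [hyp _ _ _] *; apply: hyp. Qed.
Lemma br_anti s1 s2 : Gam s1 -> Gam s2 -> br s1 s2 = sopp (br s2 s1).
Proof. by move=> *; case: HL => _ _ _ [] _ _ ->. Qed.
Lemma br_jacobi s1 s2 s3 : Gam s1 -> Gam s2 -> Gam s3 ->
  sadd (br s1 (br s2 s3)) (sadd (br s2 (br s3 s1)) (br s3 (br s1 s2))) = sz.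
Proof. by move=> *; case: HL => _ _ _ [] _ _ _ ->. Qed.
Lemma anchor_br s1 s2 f : Gam s1 -> Gam s2 -> C f ->
  rho (br s1 s2) f = fadd (rho s1 (rho s2 f)) (fopp (rho s2 (rho s1 f))).
Proof. by move=> *; case: HL => _ _ _ _ [_ ->]. Qed.

Lemma Gam_xi : Gam xi.
Proof. by case: HA. Qed.
Lemma Gam_F s : Gam s -> Gam (sF s).
Proof. by case: HA => _ hyp *; apply: hyp. Qed.
Lemma C_eta s : Gam s -> C (seta s).
Proof. by case: HA => _ _ hyp *; apply: hyp. Qed.
Lemma C_g s1 s2 : Gam s1 -> Gam s2 -> C (sg s1 s2).
Proof. by case: HA => _ _ _ hyp *; apply: hyp. Qed.

Lemma nabla_addl s1 s2 s3 : Gam s1 -> Gam s2 -> Gam s3 ->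
  nabla (sadd s1 s2) s3 = sadd (nabla s1 s3) (nabla s2 s3).
Proof. by move=> *; case: HN => _ ->. Qed.
Lemma nabla_scalel f s s' : C f -> Gam s -> Gam s' ->
  nabla (sscale f s) s' = sscale f (nabla s s').
Proof. by move=> *; case: HN => _ _ ->. Qed.
Lemma nabla_addr s s1 s2 : Gam s -> Gam s1 -> Gam s2 ->
  nabla s (sadd s1 s2) = sadd (nabla s s1) (nabla s s2).
Proof. by move=> *; case: HN => _ _ _ [->]. Qed.
Lemma nabla_leibniz s f s' : Gam s -> C f -> Gam s' ->
  nabla s (sscale f s') = sadd (sscale f (nabla s s')) (sscale (rho s f) s').
Proof. by move=> *; case: HN => _ _ _ [_ ->]. Qed.
Lemma nabla_torsion_free s1 s2 : Gam s1 -> Gam s2 ->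
  sadd (nabla s1 s2) (sopp (nabla s2 s1)) = br s1 s2.
Proof. by move=> *; case: HN => _ _ _ [_ _ ->]. Qed.
Lemma nabla_metric s s1 s2 : Gam s -> Gam s1 -> Gam s2 ->
  rho s (sg s1 s2) = fadd (sg (nabla s s1) s2) (sg s1 (nabla s s2)).
Proof. by move=> *; case: HN => _ _ _ [_ _ _ ->]. Qed.

#[local] Hint Resolve Gam_zero Gam_xi Gam_F Gam_br C_cst C_add C_opp C_anchor C_eta C_g : core.

Lemma acm_at x :
  [/\ F x *m F x = - 1%:M + eta x *m xi x, (xi x *m eta x) 0 0 = 1,
      F x *m g x *m (F x)^T = g x - eta x *m (eta x)^T, (g x)^T = g x &
      forall v : 'rV[R]_n, v != 0 -> 0 < gx x v v].
Proof. by case: HA => _ _ _ _ /(_ x). Qed.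

Lemma mxformC_at x u v : gx x u v = gx x v u.
Proof. by case: (acm_at x) => _ _ _ *; eapply mxformC; eassumption. Qed.
Lemma mxform_Fl_at x u v : gx x (u *m F x) v = - gx x u (v *m F x).
Proof. by case: (acm_at x) => *; eapply mxform_Fl; eassumption. Qed.
Lemma mxform_FF_at x u v : gx x (u *m F x) (v *m F x) = gx x u v - ex x u * ex x v.
Proof. by case: (acm_at x) => *; eapply mxform_FF; eassumption. Qed.
Lemma mxform_xi_at x u : gx x u (xi x) = ex x u.
Proof. by case: (acm_at x) => *; eapply mxform_xi; eassumption. Qed.
Lemma mxform_xil_at x u : gx x (xi x) u = ex x u.
Proof. by case: (acm_at x) => *; eapply mxform_xil; eassumption. Qed.
Lemma mulmx_FF_at x u : u *m F x *m F x = - u + ex x u *: xi x.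
Proof. by case: (acm_at x) => *; eapply mulmx_FF; eassumption. Qed.
Lemma mxlin_F_at x u : ex x (u *m F x) = 0.
Proof. by case: (acm_at x) => *; eapply mxlin_F; eassumption. Qed.
Lemma mulmx_xi_F_at x : xi x *m F x = 0.
Proof. by case: (acm_at x) => *; eapply mulmx_xi_F; eassumption. Qed.
Lemma mxlin_xi_at x : ex x (xi x) = 1.
Proof. by case: (acm_at x). Qed.

Lemma sFE s x : sF s x = s x *m F x.
Proof. by []. Qed.
Lemma setaE s x : seta s x = ex x (s x).
Proof. by []. Qed.
Lemma sgE s1 s2 x : sg s1 s2 x = gx x (s1 x) (s2 x).
Proof. by []. Qed.

Lemma seta_sg s : seta s = sg s xi.
Proof. by apply: boolp.funext => x; rewrite sgE mxform_xi_at. Qed.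
Lemma sF_xi : sF xi = sz.
Proof. by apply: boolp.funext => x; rewrite sFE mulmx_xi_F_at. Qed.
Lemma sg_xi_xi : sg xi xi = fcst 1.
Proof. by apply: boolp.funext => x; rewrite sgE mxform_xi_at mxlin_xi_at. Qed.

Lemma anchor_cst s c x : Gam s -> rho s (fcst c) x = 0.
Proof.
move=> Gs.
have one_sq : fmul (fcst 1) (fcst 1) = fcst (1 : R) :> fn R M.
  by apply: boolp.funext => y; rewrite /fmul /fcst mulr1.
have rho1 : rho s (fcst 1) x = 0.
  have := congr1 (fun f => f x) (anchor_mul Gs (C_cst 1) (C_cst 1)).
  by rewrite one_sq /fadd /fmul /fcst mul1r => h; lra.
have -> : fcst c = fmul (fcst c) (fcst 1) :> fn R M.
  by apply: boolp.funext => y; rewrite /fmul /fcst mulr1.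
by rewrite anchor_scale // /fmul rho1 mulr0.
Qed.

Lemma anchor_opp s f x : Gam s -> C f -> rho s (fopp f) x = - rho s f x.
Proof.
move=> Gs Cf.
have -> : fopp f = fmul (fcst (-1)) f.
  by apply: boolp.funext => y; rewrite /fmul /fcst /fopp mulN1r.
by rewrite anchor_scale // /fmul /fcst mulN1r.
Qed.

Lemma nabla_metric_at s s1 s2 x : Gam s -> Gam s1 -> Gam s2 ->
  rho s (sg s1 s2) x = gx x (nabla s s1 x) (s2 x) + gx x (s1 x) (nabla s s2 x).
Proof. by move=> *; rewrite nabla_metric. Qed.

Lemma br_nabla_at s1 s2 x : Gam s1 -> Gam s2 -> br s1 s2 x = nabla s1 s2 x - nabla s2 s1 x.
Proof. by move=> G1 G2; rewrite -(nabla_torsion_free G1 G2). Qed.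

Lemma nabla0r s x : Gam s -> nabla s sz x = 0.
Proof.
move=> Gs.
have /(congr1 (fun t => t x)) : nabla s (sadd sz sz) = sadd (nabla s sz) (nabla s sz).
  exact: nabla_addr Gam_zero Gam_zero.
have -> : sadd sz sz = sz by apply: boolp.funext => y; rewrite /sadd /szero addr0.
by rewrite /sadd => /(congr1 (fun w => w - nabla s sz x)); rewrite subrr addrK.
Qed.

Lemma nabla0l s x : Gam s -> nabla sz s x = 0.
Proof.
move=> Gs.
have -> : sz = sscale (fcst 0) sz by apply: boolp.funext => y; rewrite /sscale /szero scale0r.
by rewrite nabla_scalel // /sscale /fcst scale0r.
Qed.

Lemma nabla_sF s1 s2 x : nabla s1 (sF s2) x = nablaF s1 s2 x + nabla s1 s2 x *m F x.
Proof. by rewrite /Defs.nablaF subrK. Qed.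

Definition g_nablaF s1 s2 z x := gx x (nablaF s1 s2 x) z.
Definition g_nablaxi s z x := gx x (nabla s xi x) z.

Lemma g_nablaFE s1 s2 z x :
  g_nablaF s1 s2 z x = gx x (nabla s1 (sF s2) x) z + gx x (nabla s1 s2 x) (z *m F x).
Proof. by rewrite /g_nablaF /Defs.nablaF mxformDl mxformNl mxform_Fl_at opprK. Qed.

Lemma g_nablaFDr s1 s2 u v x : g_nablaF s1 s2 (u + v) x = g_nablaF s1 s2 u x + g_nablaF s1 s2 v x.
Proof. exact: mxformDr. Qed.
Lemma g_nablaFZr s1 s2 a u x : g_nablaF s1 s2 (a *: u) x = a * g_nablaF s1 s2 u x.
Proof. exact: mxformZr. Qed.
Lemma g_nablaFNr s1 s2 u x : g_nablaF s1 s2 (- u) x = - g_nablaF s1 s2 u x.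
Proof. exact: mxformNr. Qed.
Lemma g_nablaxiDr s u v x : g_nablaxi s (u + v) x = g_nablaxi s u x + g_nablaxi s v x.
Proof. exact: mxformDr. Qed.
Lemma g_nablaxiZr s a u x : g_nablaxi s (a *: u) x = a * g_nablaxi s u x.
Proof. exact: mxformZr. Qed.
Lemma g_nablaxiNr s u x : g_nablaxi s (- u) x = - g_nablaxi s u x.
Proof. exact: mxformNr. Qed.

Lemma g_nablaF0l s z x : Gam s -> g_nablaF sz s z x = 0.
Proof.
move=> Gs; have GF := Gam_F Gs.
by rewrite /g_nablaF /Defs.nablaF sFE !nabla0l // mul0mx subrr mxform0l.
Qed.

(* [g(xi, xi) = 1] is constant. *)
Lemma g_nablaxi_xi s x : Gam s -> g_nablaxi s (xi x) x = 0.
Proof.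
move=> Gs; have := nabla_metric_at x Gs Gam_xi Gam_xi.
by rewrite /g_nablaxi sg_xi_xi anchor_cst // (mxformC_at x (xi x)) => h; lra.
Qed.

(* Metricity of [nabla] and skew-adjointness of [F] make [nabla_s F] skew-adjoint. *)
Lemma g_nablaF_skew s1 s2 s3 x : Gam s1 -> Gam s2 -> Gam s3 ->
  g_nablaF s1 s2 (s3 x) x = - g_nablaF s1 s3 (s2 x) x.
Proof.
move=> G1 G2 G3.
have m1 := nabla_metric_at x G1 (Gam_F G2) G3.
have m2 := nabla_metric_at x G1 G2 (Gam_F G3).
have e : sg (sF s2) s3 = fopp (sg s2 (sF s3)).
  by apply: boolp.funext => y; rewrite /fopp !sgE !sFE mxform_Fl_at.
rewrite e anchor_opp // in m1; last by auto.
rewrite !sFE in m1 m2.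
have c1 := mxformC_at x (s2 x *m F x) (nabla s1 s3 x).
have c2 := mxformC_at x (s2 x) (nabla s1 (sF s3) x).
rewrite !g_nablaFE; lra.
Qed.

Lemma g_nablaF_xil s z x : Gam s -> g_nablaF s xi z x = g_nablaxi s (z *m F x) x.
Proof. by move=> Gs; rewrite g_nablaFE sF_xi nabla0r // mxform0l add0r. Qed.

Lemma g_nablaF_xir s1 s2 x : Gam s1 -> Gam s2 ->
  g_nablaF s1 s2 (xi x) x = - g_nablaxi s1 (s2 x *m F x) x.
Proof. by move=> G1 G2; rewrite g_nablaF_skew // g_nablaF_xil. Qed.

Lemma g_nablaF_sF s1 s2 z x : Gam s1 -> Gam s2 ->
  g_nablaF s1 (sF s2) z x =
    g_nablaF s1 s2 (z *m F x) x + g_nablaxi s1 (s2 x) x * ex x z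
    + ex x (s2 x) * g_nablaxi s1 z x.
Proof.
move=> G1 G2; have Ceta2 := C_eta G2.
have sFF : sF (sF s2) = sadd (sscale (fcst (-1)) s2) (sscale (seta s2) xi).
  by apply: boolp.funext => y; rewrite /sadd /sscale /fcst !sFE mulmx_FF_at scaleN1r.
have G2' : Gam (sscale (fcst (-1)) s2) by apply: Gam_scale.
have Gxi' : Gam (sscale (seta s2) xi) by apply: Gam_scale.
rewrite g_nablaFE sFF nabla_addr // !nabla_leibniz //.
rewrite /sadd /sscale anchor_cst // seta_sg nabla_metric_at //.
rewrite /fcst !mxformDl !mxformZl mxform_xil_at (g_nablaFE s1 s2) mulmx_FF_at.
rewrite mxformDr mxformNr mxformZr /g_nablaxi (mxformC_at x (s2 x) (nabla s1 xi x)).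
rewrite sgE mxform_xi_at; lra.
Qed.

Lemma anchor_seta s1 s2 x : Gam s1 -> Gam s2 ->
  rho s1 (seta s2) x = ex x (nabla s1 s2 x) + g_nablaxi s1 (s2 x) x.
Proof.
move=> G1 G2; rewrite seta_sg nabla_metric_at //.
by rewrite mxform_xi_at /g_nablaxi mxformC_at.
Qed.

Lemma d_eta_nablaxi s1 s2 x : Gam s1 -> Gam s2 ->
  deta s1 s2 x = 2^-1 * (g_nablaxi s1 (s2 x) x - g_nablaxi s2 (s1 x) x).
Proof.
move=> G1 G2; rewrite /d_eta !anchor_seta // setaE br_nabla_at // mxlinD mxlinN.
by congr (_ * _); lra.
Qed.

Lemma anchor_d_eta s s1 s2 x : Gam s -> Gam s1 -> Gam s2 ->
  rho s (deta s1 s2) x = 2^-1 * (rho s (rho s1 (seta s2)) x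
                                 - rho s (rho s2 (seta s1)) x - rho s (seta (br s1 s2)) x).
Proof.
move=> Gs G1 G2.
have C12 : C (rho s1 (seta s2)) by auto.
have C21 : C (rho s2 (seta s1)) by auto.
have C_br : C (seta (br s1 s2)) by auto.
have -> : deta s1 s2 = fmul (fcst 2^-1)
    (fadd (fadd (rho s1 (seta s2)) (fopp (rho s2 (seta s1)))) (fopp (seta (br s1 s2)))).
  by [].
rewrite anchor_scale //; last by auto.
rewrite /fmul /fcst; congr (_ * _).
rewrite !anchor_add; try by auto.
by rewrite /fadd !anchor_opp.
Qed.

Lemma d_eta_br s1 s2 s3 x : Gam s1 -> Gam s2 -> Gam s3 ->
  deta (br s1 s2) s3 x = 2^-1 * (rho s1 (rho s2 (seta s3)) x - rho s2 (rho s1 (seta s3)) x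
                                 - rho s3 (seta (br s1 s2)) x - seta (br (br s1 s2) s3) x).
Proof. by move=> G1 G2 G3; rewrite /d_eta anchor_br //; auto. Qed.

(* The cyclic identity [d_E (d_E eta) = 0]: anchor terms cancel in pairs,
   bracket terms by the Jacobi identity. *)
Lemma d_eta_closed s1 s2 s3 x : Gam s1 -> Gam s2 -> Gam s3 ->
  rho s1 (deta s2 s3) x + rho s2 (deta s3 s1) x + rho s3 (deta s1 s2) x
  - deta (br s1 s2) s3 x - deta (br s2 s3) s1 x - deta (br s3 s1) s2 x = 0.
Proof.
move=> G1 G2 G3.
rewrite !anchor_d_eta // !d_eta_br //.
have /(congr1 (fun s => ex x (s x))) := br_jacobi G1 G2 G3.
rewrite /sadd /szero !mxlinD mxlin0 => jacobi.
rewrite !setaE (br_anti (Gam_br G1 G2) G3) (br_anti (Gam_br G2 G3) G1).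
rewrite (br_anti (Gam_br G3 G1) G2) /sopp !mxlinN.
lra.
Qed.

Ltac generalize_mulmx := repeat match goal with |- context [?u *m ?A] =>
  let t := fresh "t" in move: (u *m A) => t end.

Lemma NF_nablaF s1 s2 x : Gam s1 -> Gam s2 ->
  NF F br s1 s2 x = nablaF (sF s1) s2 x - nablaF (sF s2) s1 x
    + nablaF s2 s1 x *m F x - nablaF s1 s2 x *m F x.
Proof.
move=> G1 G2; have GF1 := Gam_F G1; have GF2 := Gam_F G2.
rewrite /NF !sFE !br_nabla_at // !nabla_sF !(mulmxDl, mulmxBl, mulNmx).
by generalize_mulmx; apply/rowP => j; rewrite !mxE; ring.
Qed.

Lemma eq_row_by_metric (u v : 'rV[R]_n) x :
  (forall s, Gam s -> gx x u (s x) = gx x v (s x)) -> u = v.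
Proof.
move=> uv; have [s [Gs sx]] := Gam_span x (u - v).
have : gx x (u - v) (u - v) = 0 by rewrite mxformDl mxformNl -sx uv // subrr.
apply: contra_eq => neq; rewrite -subr_eq0 in neq.
by case: (acm_at x) => _ _ _ _ /(_ _ neq) /lt0r_neq0.
Qed.

Section SasakianNablaF.
Hypothesis sasaki : sasakian F xi eta g rho br Gam.

Lemma d_eta_Omega s1 s2 : Gam s1 -> Gam s2 -> deta s1 s2 = Omega F g s1 s2.
Proof. by move=> G1 G2; case: (sasaki G1 G2). Qed.

Lemma d_eta_Omega_at s1 s2 x : Gam s1 -> Gam s2 -> deta s1 s2 x = gx x (s1 x) (s2 x *m F x).
Proof. by move=> G1 G2; rewrite d_eta_Omega. Qed.

Lemma g_nablaxi_antisym s1 s2 x : Gam s1 -> Gam s2 ->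
  g_nablaxi s1 (s2 x) x - g_nablaxi s2 (s1 x) x = 2 * gx x (s1 x) (s2 x *m F x).
Proof.
move=> G1 G2; have := d_eta_nablaxi x G1 G2.
by rewrite d_eta_Omega_at // => h; lra.
Qed.

(* [d_E Omega = d_E (d_E eta) = 0], written through [nabla F]. *)
Lemma g_nablaF_cyclic s1 s2 s3 x : Gam s1 -> Gam s2 -> Gam s3 ->
  g_nablaF s1 s2 (s3 x) x + g_nablaF s2 s3 (s1 x) x + g_nablaF s3 s1 (s2 x) x = 0.
Proof.
move=> G1 G2 G3.
have GF1 := Gam_F G1; have GF2 := Gam_F G2; have GF3 := Gam_F G3.
have := d_eta_closed x G1 G2 G3.
have Gb12 := Gam_br G1 G2; have Gb23 := Gam_br G2 G3; have Gb31 := Gam_br G3 G1.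
rewrite (d_eta_Omega G2 G3) (d_eta_Omega G3 G1) (d_eta_Omega G1 G2) !d_eta_Omega_at //.
rewrite /Omega !nabla_metric_at //.
rewrite !sFE !br_nabla_at // !mxformDl !mxformNl.
have q1 := g_nablaFE s1 s3 (s2 x) x; have q2 := g_nablaFE s2 s1 (s3 x) x.
have q3 := g_nablaFE s3 s2 (s1 x) x.
have r1 := g_nablaF_skew x G1 G2 G3; have r2 := g_nablaF_skew x G2 G3 G1.
have r3 := g_nablaF_skew x G3 G1 G2.
rewrite (mxformC_at x (s2 x) (nabla s1 (sF s3) x)) (mxformC_at x (s3 x) (nabla s2 (sF s1) x)).
rewrite (mxformC_at x (s1 x) (nabla s3 (sF s2) x)).
lra.
Qed.

(* Normality [N_F + 2 d_E eta (x) xi = 0], tested against [z]. *)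
Lemma g_nablaF_normal s1 s2 z x : Gam s1 -> Gam s2 ->
  g_nablaF (sF s1) s2 z x - g_nablaF (sF s2) s1 z x
  - g_nablaF s2 s1 (z *m F x) x + g_nablaF s1 s2 (z *m F x) x
  = - 2 * gx x (s1 x) (s2 x *m F x) * ex x z.
Proof.
move=> G1 G2.
have := congr1 (fun s => s x) (sasaki G1 G2).2.
rewrite /= /szero NF_nablaF // d_eta_Omega_at // /g_nablaF.
move: (nablaF (sF s1) s2 x) (nablaF (sF s2) s1 x) (nablaF s2 s1 x) (nablaF s1 s2 x).
move=> p1 p2 p3 p4 /(congr1 (gx x ^~ z)).
rewrite mxformDl mxformZl mxform_xil_at mxform0l !mxformDl !mxformNl !mxform_Fl_at.
by move=> h; lra.
Qed.

Lemma g_nablaxi_xil z x : g_nablaxi xi z x = 0.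
Proof.
have [s [Gs <-]] := Gam_span x z.
have := g_nablaxi_antisym x Gam_xi Gs.
by rewrite g_nablaxi_xi // mxform_xil_at mxlin_F_at => h; lra.
Qed.

Lemma g_nablaxi_sF_F s1 s2 x : Gam s1 -> Gam s2 ->
  g_nablaxi (sF s1) (s2 x *m F x) x = gx x (s1 x *m F x) (s2 x *m F x *m F x).
Proof.
move=> G1 G2; have GF1 := Gam_F G1; have GF2 := Gam_F G2.
have n1 := g_nablaF_normal (s2 x) x G1 Gam_xi.
rewrite sF_xi g_nablaF0l // mulmx_xi_F_at mxform0r !g_nablaF_xil // in n1.
have c := g_nablaF_cyclic x Gam_xi G1 GF2.
rewrite g_nablaF_xir // !g_nablaF_xil // !sFE in c.
have := g_nablaxi_antisym x GF1 GF2.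
rewrite !sFE; lra.
Qed.

Lemma g_nablaxi_sF s z x : Gam s -> g_nablaxi (sF s) z x = gx x (s x *m F x) (z *m F x).
Proof.
move=> Gs; have GF := Gam_F Gs; have [s' [Gs' <-]] := Gam_span x z.
have ez : s' x = - (s' x *m F x *m F x) + ex x (s' x) *: xi x.
  by rewrite mulmx_FF_at opprD opprK subrK.
rewrite {1}ez g_nablaxiDr g_nablaxiNr g_nablaxiZr g_nablaxi_xi //.
have k := g_nablaxi_sF_F x Gs (Gam_F Gs').
rewrite !sFE in k; rewrite k mulr0 addr0.
rewrite (mulmx_FF_at x (s' x)) mulmxDl mulNmx -scalemxAl mulmx_xi_F_at scaler0 addr0.
by rewrite mxformNr opprK.
Qed.

(* That is, [nabla_s xi = - F s]. *)
Lemma g_nablaxi_eq s z x : Gam s -> g_nablaxi s z x = gx x (s x) (z *m F x).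
Proof.
move=> Gs; have GF := Gam_F Gs; have GFF := Gam_F GF.
have es : s = sadd (sscale (fcst (-1)) (sF (sF s))) (sscale (seta s) xi).
  apply: boolp.funext => y.
  by rewrite /sadd /sscale /fcst !sFE mulmx_FF_at scaleN1r opprD opprK subrK.
have G1 : Gam (sscale (fcst (-1)) (sF (sF s))) by apply: Gam_scale.
have G2 : Gam (sscale (seta s) xi) by apply: Gam_scale; auto.
rewrite /g_nablaxi {1}es nabla_addl // !nabla_scalel //; last exact: C_eta.
rewrite /sadd /sscale /fcst /= mxformDl !mxformZl -/(g_nablaxi _ z x) -/(g_nablaxi xi z x).
rewrite g_nablaxi_xil g_nablaxi_sF // sFE mulmx_FF_at mxformDl mxformNl mxformZl.
by rewrite mxform_xil_at mxlin_F_at; lra.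
Qed.

(* Once [nabla xi] is known, the cyclic identity for [(s1, s2, s3)] and
   [(s1, F s2, F s3)], normality tested against [F s1] and the [F]-shift
   [g_nablaF_sF] form a linear system determining [g((nabla_s1 F) s2, s3)]. *)
Lemma g_nablaF_eq s1 s2 s3 x : Gam s1 -> Gam s2 -> Gam s3 ->
  g_nablaF s1 s2 (s3 x) x =
    gx x (s1 x) (s2 x) * ex x (s3 x) - ex x (s2 x) * gx x (s1 x) (s3 x).
Proof.
move=> G1 G2 G3.
have GF1 := Gam_F G1; have GF2 := Gam_F G2; have GF3 := Gam_F G3.
have cyc := g_nablaF_cyclic x G1 G2 G3.
have cycF := g_nablaF_cyclic x G1 GF2 GF3.
have normal := g_nablaF_normal (s1 x *m F x) x G2 G3.
have shift23 := g_nablaF_sF (s1 x) x GF2 G3.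
have shift32 := g_nablaF_sF (s1 x) x GF3 G2.
have shift12 := g_nablaF_sF (sF s3 x) x G1 G2.
have skewF := g_nablaF_skew x GF3 G1 GF2.
have skew := g_nablaF_skew x G3 G2 G1.
rewrite !sFE in cycF skewF shift12.
rewrite (mulmx_FF_at x (s1 x)) !g_nablaFDr !g_nablaFNr !g_nablaFZr in normal.
rewrite !g_nablaF_xir // mxlin_F_at in normal.
rewrite (mulmx_FF_at x (s3 x)) !g_nablaFDr !g_nablaFNr !g_nablaFZr in shift12.
rewrite !g_nablaF_xir // in shift12.
rewrite !g_nablaxi_eq // in cyc cycF normal shift23 shift32 skewF shift12 skew.
rewrite !sFE !mxform_FF_at !mulmx_FF_at in normal shift23 shift32 shift12.
rewrite !mxformDr !mxformNr !mxformZr !mxform_xi_at !mxlin_F_at in normal shift23 shift32 shift12.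
rewrite (mxformC_at x (s3 x) (s2 x)) (mxformC_at x (s2 x) (s1 x)) (mxformC_at x (s3 x) (s1 x))
  in normal shift23 shift32 shift12 *.
lra.
Qed.

Lemma nablaF_of_sasakian s1 s2 : Gam s1 -> Gam s2 ->
  nablaF s1 s2 = (fun x => sg s1 s2 x *: xi x - seta s2 x *: s1 x).
Proof.
move=> G1 G2; apply: boolp.funext => x; apply: (@eq_row_by_metric _ _ x) => s3 G3.
rewrite -/(g_nablaF s1 s2 (s3 x) x) g_nablaF_eq // mxformDl mxformNl !mxformZl mxform_xil_at.
by rewrite sgE setaE.
Qed.

End SasakianNablaF.

Section NablaFSasakian.
Hypothesis nablaF_eq : forall s1 s2, Gam s1 -> Gam s2 ->
  nablaF s1 s2 = (fun x => sg s1 s2 x *: xi x - seta s2 x *: s1 x).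

Lemma nabla_sF_eq s1 s2 x : Gam s1 -> Gam s2 ->
  nabla s1 (sF s2) x = nabla s1 s2 x *m F x + (gx x (s1 x) (s2 x) *: xi x - ex x (s2 x) *: s1 x).
Proof. by move=> G1 G2; rewrite nabla_sF nablaF_eq // addrC. Qed.

Lemma nabla_xi s x : Gam s -> nabla s xi x = - (s x *m F x).
Proof.
move=> Gs; have := nabla_sF_eq x Gs Gam_xi.
rewrite sF_xi nabla0r // mxform_xi_at mxlin_xi_at scale1r.
move/(congr1 (mulmx^~ (F x))) => /=.
rewrite mul0mx !(mulmxDl, mulmxBl, mulNmx) -scalemxAl mulmx_xi_F_at scaler0 mulmx_FF_at.
have := g_nablaxi_xi x Gs; rewrite /g_nablaxi mxform_xi_at => ->; rewrite scale0r.
by rewrite addr0 add0r -opprD => /eqP; rewrite eq_sym oppr_eq0 addr_eq0 => /eqP.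
Qed.

Lemma d_eta_Omega_of_nablaF s1 s2 : Gam s1 -> Gam s2 -> deta s1 s2 = Omega F g s1 s2.
Proof.
move=> G1 G2; apply: boolp.funext => x.
rewrite d_eta_nablaxi // /g_nablaxi !nabla_xi // !mxformNl !mxform_Fl_at /Omega sgE sFE.
by rewrite (mxformC_at x (s2 x) (s1 x *m F x)) mxform_Fl_at; lra.
Qed.

Lemma normal_of_nablaF s1 s2 : Gam s1 -> Gam s2 ->
  (fun x => NF F br s1 s2 x + (2 * deta s1 s2 x) *: xi x) = sz.
Proof.
move=> G1 G2; have GF1 := Gam_F G1; have GF2 := Gam_F G2.
apply: boolp.funext => x.
rewrite NF_nablaF // !nablaF_eq // (d_eta_Omega_of_nablaF G1 G2) /Omega /szero !sgE !setaE !sFE.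
rewrite !(mulmxDl, mulmxBl, mulNmx) -!scalemxAl mulmx_xi_F_at !scaler0 !mxform_Fl_at.
rewrite (mxformC_at x (s2 x) (s1 x *m F x)) mxform_Fl_at.
by generalize_mulmx; apply/rowP => j; rewrite !mxE; ring.
Qed.

End NablaFSasakian.

End LieAlgebroidCalculus.

Theorem theorem4p3 (R : realType) (M : Type) (m : nat)
    (C : fn R M -> Prop) (Gam : sec R M (2 * m + 1) -> Prop)
    (rho : sec R M (2 * m + 1) -> fn R M -> fn R M)
    (br : sec R M (2 * m + 1) -> sec R M (2 * m + 1) -> sec R M (2 * m + 1))
    (F : M -> 'M[R]_(2 * m + 1)) (xi : sec R M (2 * m + 1))
    (eta : M -> 'cV[R]_(2 * m + 1)) (g : M -> 'M[R]_(2 * m + 1))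
    (nabla : sec R M (2 * m + 1) -> sec R M (2 * m + 1) -> sec R M (2 * m + 1)) :
  lie_algebroid C Gam rho br ->
  almost_contact_riemannian F xi eta g C Gam ->
  levi_civita g rho br C Gam nabla ->
  (sasakian F xi eta g rho br Gam <->
   forall s1 s2, Gam s1 -> Gam s2 ->
     nablaF F nabla s1 s2 =
       (fun x => sg g s1 s2 x *: xi x - seta eta s2 x *: s1 x)).
Proof.
move=> HL HA HN; split=> [sasaki s1 s2 | nablaF_eq s1 s2 G1 G2].
- exact: (nablaF_of_sasakian HL HA HN sasaki).
- split; first exact: (d_eta_Omega_of_nablaF HL HA HN nablaF_eq).
  exact: (normal_of_nablaF HL HA HN nablaF_eq).
Qed.
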